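(* Suppose $E_3\subset S=\mathrm{span}_{\mathbb{C}}\{I_1,\dots,I_m\}$, i.e. $a_k=b_k=0$ for all $k=m+1,\dots,n$. Then for every circle $C$ as described in the context, $\lambda:=\int_C\zeta^{-1}\,d\zeta=2\pi i$ (that is, $2\pi i$ times the unit of $\mathbb{A}_n^m$).
   Context: Fix natural numbers $m\le n$. $\mathbb{A}_n^m$ is a commutative associative algebra with unit over $\mathbb{C}$ with a basis $\{I_k\}_{k=1}^n$ satisfying: (1) for $r,s\in\{1,\dots,m\}$, $I_rI_s=0$ if $r\ne s$ and $I_rI_r=I_r$; (2) for $r,s\in\{m+1,\dots,n\}$, $I_rI_s=\sum_{k=\max\{r,s\}+1}^{n}\Upsilon^{s}_{r,k}I_k$ with constants $\Upsilon^s_{r,k}\in\mathbb{C}$; (3) for each $s\in\{m+1,\dots,n\}$ there is a unique $u_s\in\{1,\dots,m\}$ such that for $r\in\{1,\dots,m\}$, $I_rI_s=I_s$ if $r=u_s$ and $0$ otherwise. Unit $1=\sum_{u=1}^mI_u$; $\mathbb{A}_n^m=S\oplus_sN$ with $S=\mathrm{span}\{I_1,\dots,I_m\}$, $N=\mathrm{span}\{I_{m+1},\dots,I_n\}$. $f_u(\sum_k\lambda_kI_k)=\lambda_u$. Let $e_1=1$, $e_2=\sum_ka_kI_k$, $e_3=\sum_kb_kI_k$ ($a_k,b_k\in\mathbb{C}$) be linearly independent over $\mathbb{R}$; $\zeta=xe_1+ye_2+ze_3$ ($x,y,z\in\mathbb{R}$), $E_3$ their real span. Standing assumption: $f_u(E_3)=\mathbb{C}$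 for all $u=1,\dots,m$. $\zeta$ is non-invertible exactly when $(x,y,z)$ lies on one of the lines $L_u=\{x+y\,\mathrm{Re}\,a_u+z\,\mathrm{Re}\,b_u=0,\ y\,\mathrm{Im}\,a_u+z\,\mathrm{Im}\,b_u=0\}$. The circle: $C\subset E_3$ is $C=\{xe_1+ye_2+ze_3:(x,y,z)\in C'\}$ for a Euclidean circle $C'\subset\mathbb{R}^3$ of radius $R>0$ centered at the origin, such that for every $u$ the image $f_u(C)$ is a positively oriented closed Jordan curve in $\mathbb{C}$ bounding a domain containing $0$. Integral: for a Jordan rectifiable curve $\gamma$ and continuous $\Psi=\sum_k(U_k+iV_k)I_k$ on $\gamma_\zeta$, $\int_{\gamma_\zeta}\Psi d\zeta:=\sum_kI_k\int_\gamma(U_k+iV_k)dx+\sum_ke_2I_k\int_\gamma(U_k+iV_k)dy+\sum_ke_3I_k\int_\gamma(U_k+iV_k)dz$. *)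

From Stdlib Require Import Reals Lra Lia Arith Bool ClassicalEpsilon.
From Coquelicot Require Import Coquelicot.
Open Scope R_scope.
Local Open Scope bool_scope.

(* Elements of A_n^m are represented by their coordinates in the basis
   I_1..I_n: a function nat -> C, of which only indices 1..n are meaningful. *)
Definition elt := nat -> C.

Fixpoint csum (f : nat -> C) (N : nat) : C :=
  match N with
  | O => RtoC 0
  | S N' => Cplus (csum f N') (f N)
  end.

(* Coefficient of I_k in the product I_r I_s, given by rules (1)-(3) and
   commutativity.  Ups r s k stands for Upsilon^s_{r,k};  us s stands for u_s. *)
Definition prodI (n m : nat) (Ups : nat -> nat -> nat -> C) (us : nat -> nat)
  (r s k : nat) : C :=
  if Nat.leb r m then
    if Nat.leb s m then
      (if Nat.eqb r s && Nat.eqb k r then RtoC 1 else RtoC 0)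
    else (if Nat.eqb r (us s) && Nat.eqb k s then RtoC 1 else RtoC 0)
  else
    if Nat.leb s m then
      (if Nat.eqb s (us r) && Nat.eqb k r then RtoC 1 else RtoC 0)
    else (if Nat.ltb (Nat.max r s) k && Nat.leb k n then Ups r s k else RtoC 0).

Definition mul (n m : nat) Ups us (x y : elt) : elt :=
  fun k => csum (fun r => csum (fun s =>
             Cmult (Cmult (x r) (y s)) (prodI n m Ups us r s k)) n) n.

Definition unitA (m : nat) : elt :=
  fun k => if Nat.leb 1 k && Nat.leb k m then RtoC 1 else RtoC 0.

Definition eqA (n : nat) (x y : elt) : Prop :=
  forall k, (1 <= k <= n)%nat -> x k = y k.

Definition is_algebra (n m : nat) Ups us : Prop :=
  (forall s, (m < s <= n)%nat -> (1 <= us s <= m)%nat) /\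
  (forall x y, eqA n (mul n m Ups us x y) (mul n m Ups us y x)) /\
  (forall x y z, eqA n (mul n m Ups us (mul n m Ups us x y) z)
                        (mul n m Ups us x (mul n m Ups us y z))).

(* The inverse: an element w with x w = 1 (chosen by epsilon; it is unique
   whenever it exists). *)
Definition inv (n m : nat) Ups us (x : elt) : elt :=
  epsilon (inhabits (fun _ : nat => RtoC 0))
    (fun w => eqA n (mul n m Ups us x w) (unitA m)).

(* zeta = x e_1 + y e_2 + z e_3, with e_1 = 1, e_2 = sum a_k I_k, e_3 = sum b_k I_k *)
Definition zeta (m : nat) (a b : elt) (x y z : R) : elt :=
  fun k => Cplus (Cplus (Cmult (RtoC x) (unitA m k)) (Cmult (RtoC y) (a k)))
                 (Cmult (RtoC z) (b k)).

Definition lin_indep3 (n m : nat) (a b : elt) : Prop :=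
  forall x y z : R, eqA n (zeta m a b x y z) (fun _ => RtoC 0) ->
    x = 0 /\ y = 0 /\ z = 0.

Definition cint (f : R -> C) (a0 b0 : R) : C :=
  (RInt (fun t => Re (f t)) a0 b0, RInt (fun t => Im (f t)) a0 b0).

(* Integral  int_{gamma_zeta} Psi dzeta  along the closed curve
   t |-> (gx t, gy t, gz t), t in [0, 2 pi], where int_gamma F dx is the line
   integral  int_0^{2pi} F(gamma t) gx'(t) dt, etc. *)
Definition contour_int (n m : nat) Ups us (a b : elt)
  (Psi : R -> R -> R -> elt) (gx gy gz : R -> R) : elt :=
  let F := fun t => Psi (gx t) (gy t) (gz t) in
  let Jx : elt := fun k => cint (fun t => Cmult (F t k) (RtoC (Derive gx t))) 0 (2*PI) in
  let Jy : elt := fun k => cint (fun t => Cmult (F t k) (RtoC (Derive gy t))) 0 (2*PI) in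
  let Jz : elt := fun k => cint (fun t => Cmult (F t k) (RtoC (Derive gz t))) 0 (2*PI) in
  fun k => Cplus (Cplus (Jx k) (mul n m Ups us (zeta m a b 0 1 0) Jy k))
                 (mul n m Ups us (zeta m a b 0 0 1) Jz k).

Definition jordan (w : R -> C) : Prop :=
  (forall t, continuous w t) /\ w 0 = w (2*PI) /\
  (forall s t, 0 <= s < 2*PI -> 0 <= t < 2*PI -> w s = w t -> s = t).

Definition on_curve (w : R -> C) (z : C) : Prop :=
  exists t, 0 <= t <= 2*PI /\ w t = z.

Definition reach (w : R -> C) (z z' : C) : Prop :=
  exists p : R -> C, (forall s, continuous p s) /\ p 0 = z /\ p 1 = z' /\
    forall s, 0 <= s <= 1 -> ~ on_curve w (p s).

(* z lies in the bounded domain bounded by the curve *)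
Definition inside (w : R -> C) (z : C) : Prop :=
  ~ on_curve w z /\ exists M : R, forall z', reach w z z' -> Cmod z' <= M.

(* winding number of w around z equals 1 (via a continuous argument) *)
Definition winds_once (w : R -> C) (z : C) : Prop :=
  exists th : R -> R, (forall t, continuous th t) /\
    (forall t, 0 <= t <= 2*PI ->
       Cminus (w t) z = Cmult (RtoC (Cmod (Cminus (w t) z))) (cos (th t), sin (th t))) /\
    th (2*PI) - th 0 = 2*PI.

Definition pos_jordan_around0 (w : R -> C) : Prop :=
  jordan w /\ inside w (RtoC 0) /\ (forall z, inside w z -> winds_once w z).

(* On E_3 ⊂ S, multiplication by ζ is diagonal: (ζ x)_k = f_(u_k)(ζ) x_k, where
   u_k = k for k ≤ m.  Hence ζ^-1 has coordinates 1/f_k(ζ) for k ≤ m and 0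
   beyond, so the k-th coordinate of the integral vanishes for k > m and, for
   k ≤ m, is the scalar integral of w'/w over [0, 2π] for the plane curve
   w(t) = f_k(ζ(t)).  Its real part is ln|w| taken between equal endpoints.
   Its imaginary part A(t) = ∫_0^t Im(w'/w) is an angle: the unit vector w/|w|
   rotated back by A is constant, so A differs from any continuous argument θ
   of w by a constant, and A(2π) = θ(2π) - θ(0) = 2π for a positively oriented
   Jordan curve around 0. *)

From Stdlib Require Import Reals Lra Lia Bool ZArith ClassicalEpsilon FunctionalExtensionality.
From Coquelicot Require Import Coquelicot.
Open Scope R_scope.

(** * Multiplication and inversion by elements of S *)

Lemma csum_eq0 (f : nat -> C) (N : nat) :
  (forall r, (1 <= r <= N)%nat -> f r = RtoC 0) -> csum f N = RtoC 0.
Proof.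
  induction N as [| N IH]; intros Hf; simpl; [reflexivity |].
  rewrite IH, Hf by (intros; try apply Hf; lia). ring.
Qed.

Lemma csum_single (f : nat -> C) (N r0 : nat) : (1 <= r0 <= N)%nat ->
  (forall r, (1 <= r <= N)%nat -> r <> r0 -> f r = RtoC 0) -> csum f N = f r0.
Proof.
  induction N as [| N IH]; intros Hr0 Hf; [lia |]. simpl.
  destruct (Nat.eq_dec r0 (S N)) as [-> | Hne].
  - rewrite csum_eq0 by (intros; apply Hf; lia). ring.
  - rewrite IH, (Hf (S N)) by (try lia; intros; apply Hf; lia). ring.
Qed.

Lemma unitA_val (m k : nat) : (1 <= k)%nat -> unitA m k = if Nat.leb k m then RtoC 1 else RtoC 0.
Proof. intros Hk. unfold unitA. destruct (Nat.leb_spec 1 k); [reflexivity | lia]. Qed.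

(* The idempotent I_(idem_index k) of S acts as the identity on I_k. *)
Definition idem_index (m : nat) (us : nat -> nat) (k : nat) : nat :=
  if Nat.leb k m then k else us k.

Section MultiplicationByS.

Variables (n m : nat) (Ups : nat -> nat -> nat -> C) (us : nat -> nat).
Hypothesis us_range : forall s, (m < s <= n)%nat -> (1 <= us s <= m)%nat.
Hypothesis m_le_n : (m <= n)%nat.
Definition in_S (x : elt) : Prop := forall r, (m < r <= n)%nat -> x r = RtoC 0.

Lemma idem_index_range (k : nat) : (1 <= k <= n)%nat -> (1 <= idem_index m us k <= m)%nat.
Proof.
  intros Hk. unfold idem_index. destruct (Nat.leb_spec k m); [lia | apply us_range; lia].
Qed.

Lemma prodI_S (r s k : nat) : (r <= m)%nat -> (1 <= s)%nat -> (1 <= k <= n)%nat ->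
  prodI n m Ups us r s k =
  if Nat.eqb s k && Nat.eqb r (idem_index m us k) then RtoC 1 else RtoC 0.
Proof.
  intros Hr Hs Hk. unfold prodI, idem_index.
  destruct (Nat.leb_spec r m); [| lia].
  destruct (Nat.leb_spec s m); destruct (Nat.leb_spec k m);
  destruct (Nat.eqb_spec s k); destruct (Nat.eqb_spec r s); destruct (Nat.eqb_spec k r);
  try destruct (Nat.eqb_spec r (us s)); try destruct (Nat.eqb_spec r (us k));
  try destruct (Nat.eqb_spec k s); try destruct (Nat.eqb_spec r k);
  simpl; subst; try reflexivity; lia.
Qed.

Lemma mul_S (x y : elt) (k : nat) : in_S x -> (1 <= k <= n)%nat ->
  mul n m Ups us x y k = (x (idem_index m us k) * y k)%C.
Proof.
  intros Sx Hk. pose proof (idem_index_range k Hk) as Hj. unfold mul.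
  rewrite (csum_single _ n (idem_index m us k)); [| lia |].
  - rewrite (csum_single _ n k); [| lia |].
    + rewrite prodI_S, !Nat.eqb_refl by lia. simpl. ring.
    + intros s Hs Hsk. rewrite prodI_S by lia.
      destruct (Nat.eqb_spec s k); [lia |]. simpl. ring.
  - intros r Hr Hrj. apply csum_eq0. intros s Hs.
    destruct (Nat.leb_spec r m).
    + rewrite prodI_S by lia. destruct (Nat.eqb_spec r (idem_index m us k)); [lia |].
      rewrite andb_false_r. ring.
    + rewrite Sx by lia. ring.
Qed.

Lemma inv_S (x : elt) : in_S x -> (forall u, (1 <= u <= m)%nat -> x u <> RtoC 0) ->
  forall k, (1 <= k <= n)%nat ->
  inv n m Ups us x k = if Nat.leb k m then Cinv (x k) else RtoC 0.
Proof.
  intros Sx x_nz.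
  set (w := inv n m Ups us x).
  assert (Hw : eqA n (mul n m Ups us x w) (unitA m)).
  { unfold w, inv. apply epsilon_spec.
    exists (fun k => if Nat.leb k m then Cinv (x k) else RtoC 0).
    intros k Hk. rewrite mul_S, unitA_val by (assumption || lia). unfold idem_index.
    destruct (Nat.leb_spec k m).
    - apply Cinv_r, x_nz; lia.
    - apply Cmult_0_r. }
  intros k Hk. specialize (Hw k Hk).
  rewrite mul_S, unitA_val in Hw by (assumption || lia).
  pose proof (x_nz _ (idem_index_range k Hk)) as Hj.
  replace (w k) with (x (idem_index m us k) * w k / x (idem_index m us k))%C by (field; exact Hj).
  rewrite Hw. unfold idem_index in *. destruct (Nat.leb_spec k m); field; exact Hj.
Qed.

End MultiplicationByS.

(** * Calculus of real functions *)

Lemma derive_zero_const (F : R -> R) (a b : R) : (forall t, is_derive F t 0) -> F b = F a.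
Proof.
  intros DF.
  assert (HI : is_RInt (fun _ => 0) a b (minus (F b) (F a))).
  { apply (is_RInt_derive F); [intros; apply DF | intros; apply continuous_const]. }
  apply (is_RInt_unique (V := R_CompleteNormedModule)) in HI. rewrite RInt_const in HI.
  unfold minus, plus, opp, scal in HI; simpl in HI. unfold mult in HI; simpl in HI. lra.
Qed.

Lemma continuous_cos_eq_1_not_pos (d : R -> R) (T : R) :
  (forall t, continuous d t) -> d 0 = 0 -> 0 <= T ->
  (forall t, 0 <= t <= T -> cos (d t) = 1) -> ~ 0 < d T.
Proof.
  intros d_cont d0 T_ge0 cos_d dT_pos.
  assert (d_cont' : continuity d) by (intro t; apply continuity_pt_filterlim, d_cont).
  pose proof PI_RGT_0.
  set (v := Rmin (d T) PI).
  assert (v_pos : 0 < v) by (apply Rmin_glb_lt; lra).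
  assert (v_le : v <= PI) by apply Rmin_r.
  destruct (IVT_gen d 0 T v d_cont') as [s [Hs ds]].
  { rewrite d0, Rmin_left, Rmax_right by lra. split; [lra | apply Rmin_l]. }
  rewrite Rmin_left, Rmax_right in Hs by lra.
  pose proof (cos_d s Hs) as cos1. rewrite ds in cos1.
  pose proof (cos_decreasing_1 0 v) as cos_lt. rewrite cos_0 in cos_lt.
  assert (cos v < 1) by (apply cos_lt; lra). lra.
Qed.

Lemma continuous_cos_eq_1_zero (d : R -> R) (T : R) :
  (forall t, continuous d t) -> d 0 = 0 -> 0 <= T ->
  (forall t, 0 <= t <= T -> cos (d t) = 1) -> d T = 0.
Proof.
  intros d_cont d0 T_ge0 cos_d.
  destruct (Rtotal_order (d T) 0) as [Hlt | [Heq | Hgt]]; [exfalso | exact Heq | exfalso].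
  - apply (continuous_cos_eq_1_not_pos (fun t => - d t) T).
    + intro t; apply (continuous_opp (K := R_AbsRing) (V := R_NormedModule)), d_cont.
    + rewrite d0; ring.
    + exact T_ge0.
    + intros t Ht; rewrite cos_neg; apply cos_d, Ht.
    + lra.
  - exact (continuous_cos_eq_1_not_pos d T d_cont d0 T_ge0 cos_d Hgt).
Qed.

Lemma cos_sin_period_red (t : R) : exists t', 0 <= t' <= 2 * PI /\ cos t' = cos t /\ sin t' = sin t.
Proof.
  pose proof PI_RGT_0 as PI_pos.
  set (z := Int_part (t / (2 * PI))).
  destruct (base_Int_part (t / (2 * PI))) as [H1 H2]. fold z in H1, H2.
  exists (t - 2 * IZR z * PI).
  assert (Hlo : IZR z * (2 * PI) <= t).
  { apply (Rmult_le_compat_r (2 * PI)) in H1; [| lra]. unfold Rdiv in H1.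
    rewrite Rmult_assoc, Rinv_l in H1 by lra. lra. }
  assert (Hhi : t < IZR z * (2 * PI) + 2 * PI).
  { assert (Hz : t / (2 * PI) < IZR z + 1) by lra.
    apply (Rmult_lt_compat_r (2 * PI)) in Hz; [| lra]. unfold Rdiv in Hz.
    rewrite Rmult_assoc, Rinv_l in Hz by lra. lra. }
  split; [lra |].
  destruct (Z_le_gt_dec 0 z) as [Hz | Hz].
  - replace z with (Z.of_nat (Z.to_nat z)) by lia. rewrite <- INR_IZR_INZ.
    set (k := Z.to_nat z).
    rewrite <- (cos_period (t - 2 * INR k * PI) k), <- (sin_period (t - 2 * INR k * PI) k).
    replace (t - 2 * INR k * PI + 2 * INR k * PI) with t by ring. auto.
  - replace z with (- Z.of_nat (Z.to_nat (- z)))%Z by lia. rewrite opp_IZR, <- INR_IZR_INZ.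
    set (k := Z.to_nat (- z)).
    replace (t - 2 * - INR k * PI) with (t + 2 * INR k * PI) by ring.
    rewrite cos_period, sin_period. auto.
Qed.

Lemma is_derive_ln_norm (x y : R -> R) (t dx dy : R) :
  is_derive x t dx -> is_derive y t dy -> 0 < x t ^ 2 + y t ^ 2 ->
  is_derive (fun s => ln (sqrt (x s ^ 2 + y s ^ 2))) t ((x t * dx + y t * dy) / (x t ^ 2 + y t ^ 2)).
Proof.
  intros Dx Dy N_pos.
  assert (r_pos : 0 < sqrt (x t ^ 2 + y t ^ 2)) by (apply sqrt_lt_R0; exact N_pos).
  auto_derive.
  { repeat split; try (eexists; eassumption); simpl in *; lra. }
  rewrite (is_derive_unique (fun s : R => x s) _ _ Dx), (is_derive_unique (fun s : R => y s) _ _ Dy).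
  replace (x t * (x t * 1) + y t * (y t * 1)) with (x t ^ 2 + y t ^ 2) by ring.
  assert (Hr : sqrt (x t ^ 2 + y t ^ 2) * sqrt (x t ^ 2 + y t ^ 2) = x t ^ 2 + y t ^ 2) by (apply sqrt_sqrt; lra).
  set (r := sqrt (x t ^ 2 + y t ^ 2)) in *. rewrite <- Hr. field. lra.
Qed.

Lemma is_derive_rotated_coordinate (x y G : R -> R) (t dx dy : R) :
  is_derive x t dx -> is_derive y t dy ->
  is_derive G t ((x t * dy - y t * dx) / (x t ^ 2 + y t ^ 2)) ->
  0 < x t ^ 2 + y t ^ 2 ->
  is_derive (fun s => (x s * cos (G s) + y s * sin (G s)) / sqrt (x s ^ 2 + y s ^ 2)) t 0.
Proof.
  intros Dx Dy DG N_pos.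
  assert (r_pos : 0 < sqrt (x t ^ 2 + y t ^ 2)) by (apply sqrt_lt_R0; exact N_pos).
  auto_derive.
  { repeat split; try (eexists; eassumption); simpl in *; lra. }
  rewrite (is_derive_unique (fun s : R => x s) _ _ Dx), (is_derive_unique (fun s : R => y s) _ _ Dy),
    (is_derive_unique (fun s : R => G s) _ _ DG).
  replace (x t * (x t * 1) + y t * (y t * 1)) with (x t ^ 2 + y t ^ 2) by ring.
  assert (Hr : sqrt (x t ^ 2 + y t ^ 2) ^ 2 = x t ^ 2 + y t ^ 2) by (apply pow2_sqrt; lra).
  set (r := sqrt (x t ^ 2 + y t ^ 2)) in *. clearbody r.
  field_simplify; try lra. unfold Rdiv. apply Rmult_eq_0_compat_r. rewrite Hr. ring.
Qed.

(** * Complex-valued functions of a real variable *)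

Definition ccontinuous (f : R -> C) : Prop :=
  forall t, continuous (fun s => Re (f s)) t /\ continuous (fun s => Im (f s)) t.

Definition cderivative (f f' : R -> C) : Prop :=
  forall t, is_derive (fun s => Re (f s)) t (Re (f' t)) /\ is_derive (fun s => Im (f s)) t (Im (f' t)).

Lemma cderivative_ccontinuous (f f' : R -> C) : cderivative f f' -> ccontinuous f.
Proof.
  intros Df t. destruct (Df t) as [Dre Dim].
  split; apply (ex_derive_continuous (K := R_AbsRing) (V := R_NormedModule)); eexists; eassumption.
Qed.

Lemma ccontinuous_ext (f g : R -> C) : (forall t, f t = g t) -> ccontinuous g -> ccontinuous f.
Proof.
  intros Hfg Hg t. destruct (Hg t).
  split; [apply (continuous_ext (fun s => Re (g s))) | apply (continuous_ext (fun s => Im (g s)))];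
    auto; intro s; rewrite Hfg; reflexivity.
Qed.

Lemma ccontinuous_const (c : C) : ccontinuous (fun _ => c).
Proof. intro t. split; apply continuous_const. Qed.

Lemma ccontinuous_RtoC (r : R -> R) : (forall t, continuous r t) -> ccontinuous (fun t => RtoC (r t)).
Proof. intros Hr t. split; [apply Hr | apply continuous_const]. Qed.

Lemma ccontinuous_Cplus (f g : R -> C) :
  ccontinuous f -> ccontinuous g -> ccontinuous (fun t => (f t + g t)%C).
Proof.
  intros Hf Hg t. destruct (Hf t), (Hg t).
  split; apply (continuous_plus (K := R_AbsRing) (V := R_NormedModule)); assumption.
Qed.

Lemma ccontinuous_Cmult (f g : R -> C) :
  ccontinuous f -> ccontinuous g -> ccontinuous (fun t => (f t * g t)%C).
Proof.
  intros Hf Hg t. destruct (Hf t), (Hg t).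
  split; [apply (continuous_minus (K := R_AbsRing) (V := R_NormedModule))
         | apply (continuous_plus (K := R_AbsRing) (V := R_NormedModule))];
    apply (continuous_mult (K := R_AbsRing)); assumption.
Qed.

Lemma Cnorm2_pos (z : C) : z <> RtoC 0 -> 0 < Re z ^ 2 + Im z ^ 2.
Proof.
  intros Hz. destruct (Rle_lt_or_eq_dec 0 (Re z ^ 2 + Im z ^ 2)) as [Hlt | Heq]; [nra | exact Hlt |].
  exfalso; apply Hz, Cmod_eq_0. unfold Cmod; unfold Re, Im in Heq; rewrite <- Heq; apply sqrt_0.
Qed.

Lemma ccontinuous_Cinv (f : R -> C) :
  ccontinuous f -> (forall t, f t <> RtoC 0) -> ccontinuous (fun t => Cinv (f t)).
Proof.
  intros Hf Hnz t. destruct (Hf t) as [Hre Him].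
  assert (HN : continuous (fun s => Re (f s) ^ 2 + Im (f s) ^ 2) t).
  { apply (continuous_plus (K := R_AbsRing) (V := R_NormedModule));
      apply (continuous_mult (K := R_AbsRing)); auto;
      apply (continuous_mult (K := R_AbsRing)); auto; apply continuous_const. }
  assert (HN0 : Re (f t) ^ 2 + Im (f t) ^ 2 <> 0) by (apply Rgt_not_eq, Cnorm2_pos, Hnz).
  split; simpl; apply (continuous_mult (K := R_AbsRing)).
  - exact Hre.
  - apply continuous_Rinv_comp; auto.
  - apply (continuous_opp (K := R_AbsRing) (V := R_NormedModule)); auto.
  - apply continuous_Rinv_comp; auto.
Qed.

Lemma Re_Cdiv (u z : C) : Re (u / z)%C = (Re z * Re u + Im z * Im u) / (Re z ^ 2 + Im z ^ 2).
Proof. unfold Cdiv, Cinv, Cmult, Re, Im; simpl. unfold Rdiv; ring. Qed.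

Lemma Im_Cdiv (u z : C) : Im (u / z)%C = (Re z * Im u - Im z * Re u) / (Re z ^ 2 + Im z ^ 2).
Proof. unfold Cdiv, Cinv, Cmult, Re, Im; simpl. unfold Rdiv; ring. Qed.

Lemma polar_Re_Im (z : C) (a : R) :
  z = (RtoC (Cmod z) * (cos a, sin a))%C -> Re z = Cmod z * cos a /\ Im z = Cmod z * sin a.
Proof.
  intros Hz. set (r := Cmod z) in *. rewrite Hz. unfold Re, Im; simpl. split; ring.
Qed.

Lemma Cminus_0_r (z : C) : Cminus z (RtoC 0) = z.
Proof. ring. Qed.

Lemma RInt_lincomb (u v : R -> R) (p q a b : R) :
  ex_RInt u a b -> ex_RInt v a b ->
  RInt (fun t => p * u t + q * v t) a b = p * RInt u a b + q * RInt v a b.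
Proof.
  intros Iu Iv.
  rewrite (RInt_plus (V := R_CompleteNormedModule) (fun t => p * u t) (fun t => q * v t))
    by first [exact (ex_RInt_scal (V := R_NormedModule) _ _ _ p Iu)
            | exact (ex_RInt_scal (V := R_NormedModule) _ _ _ q Iv)].
  rewrite (RInt_scal (V := R_CompleteNormedModule) u), (RInt_scal (V := R_CompleteNormedModule) v) by assumption.
  reflexivity.
Qed.

Lemma ccontinuous_ex_RInt (f : R -> C) (a b : R) :
  ccontinuous f -> ex_RInt (fun t => Re (f t)) a b /\ ex_RInt (fun t => Im (f t)) a b.
Proof.
  intros Hf; split; apply (ex_RInt_continuous (V := R_CompleteNormedModule)); intros; apply Hf.
Qed.

Lemma cint_ext (f g : R -> C) (a b : R) : (forall t, f t = g t) -> cint f a b = cint g a b.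
Proof.
  intros Hfg. unfold cint.
  f_equal; apply (RInt_ext (V := R_CompleteNormedModule)); intros; rewrite Hfg; reflexivity.
Qed.

Lemma cint_0 (a b : R) : cint (fun _ => RtoC 0) a b = RtoC 0.
Proof.
  unfold cint, RtoC; simpl. rewrite (RInt_const (V := R_CompleteNormedModule)).
  unfold scal; simpl. unfold mult; simpl. rewrite Rmult_0_r. reflexivity.
Qed.

Lemma cint_plus (f g : R -> C) (a b : R) : ccontinuous f -> ccontinuous g ->
  cint (fun t => (f t + g t)%C) a b = (cint f a b + cint g a b)%C.
Proof.
  intros Hf Hg.
  destruct (ccontinuous_ex_RInt f a b Hf) as [If_re If_im].
  destruct (ccontinuous_ex_RInt g a b Hg) as [Ig_re Ig_im].
  unfold cint, Cplus; simpl. f_equal.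
  - exact (RInt_plus (V := R_CompleteNormedModule) (fun t => Re (f t)) (fun t => Re (g t)) a b If_re Ig_re).
  - exact (RInt_plus (V := R_CompleteNormedModule) (fun t => Im (f t)) (fun t => Im (g t)) a b If_im Ig_im).
Qed.

Lemma cint_scal (c : C) (f : R -> C) (a b : R) : ccontinuous f ->
  cint (fun t => (c * f t)%C) a b = (c * cint f a b)%C.
Proof.
  intros Hf. destruct (ccontinuous_ex_RInt f a b Hf) as [Ire Iim].
  unfold cint, Cmult; simpl. f_equal.
  - transitivity (RInt (fun t => Re c * Re (f t) + - Im c * Im (f t)) a b).
    + apply (RInt_ext (V := R_CompleteNormedModule)); intros; simpl; unfold Re, Im; ring.
    + rewrite (RInt_lincomb (fun t => Re (f t)) (fun t => Im (f t))) by assumption.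
      simpl; unfold Re, Im; ring.
  - transitivity (RInt (fun t => Re c * Im (f t) + Im c * Re (f t)) a b).
    + apply (RInt_ext (V := R_CompleteNormedModule)); intros; simpl; unfold Re, Im; ring.
    + rewrite (RInt_lincomb (fun t => Im (f t)) (fun t => Re (f t))) by assumption.
      simpl; unfold Re, Im; ring.
Qed.

(** * The logarithmic derivative of a plane curve *)

Section LogarithmicDerivative.

Variables w w' : R -> C.
Hypothesis w_der : cderivative w w'.
Hypothesis w'_cont : ccontinuous w'.
Hypothesis w_nz : forall t, w t <> RtoC 0.

Lemma ccontinuous_log_derivative : ccontinuous (fun t => (w' t / w t)%C).
Proof.
  apply ccontinuous_Cmult; [exact w'_cont |].
  apply ccontinuous_Cinv; [exact (cderivative_ccontinuous _ _ w_der) | exact w_nz].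
Qed.

Lemma is_RInt_Re_log_derivative (a b : R) :
  is_RInt (fun t => Re (w' t / w t)%C) a b (ln (Cmod (w b)) - ln (Cmod (w a))).
Proof.
  apply (is_RInt_derive (fun t => ln (Cmod (w t)))).
  - intros t _. destruct (w_der t) as [Dx Dy].
    rewrite Re_Cdiv. exact (is_derive_ln_norm _ _ t _ _ Dx Dy (Cnorm2_pos _ (w_nz t))).
  - intros t _. apply ccontinuous_log_derivative.
Qed.

Definition arg_integral (t : R) : R := RInt (fun s => Im (w' s / w s)%C) 0 t.

Lemma arg_integral_0 : arg_integral 0 = 0.
Proof. apply (RInt_point (V := R_CompleteNormedModule)). Qed.

Lemma is_derive_arg_integral (t : R) :
  is_derive arg_integral t ((Re (w t) * Im (w' t) - Im (w t) * Re (w' t)) / (Re (w t) ^ 2 + Im (w t) ^ 2)).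
Proof.
  rewrite <- Im_Cdiv.
  apply (is_derive_RInt (fun s => Im (w' s / w s)%C) arg_integral 0);
    [| apply ccontinuous_log_derivative].
  apply filter_forall; intro s. apply (RInt_correct (V := R_CompleteNormedModule)), ex_RInt_continuous.
  intros; apply ccontinuous_log_derivative.
Qed.

(* The unit vector [w t / |w t|], rotated back by the accumulated angle, does not move. *)
Lemma rotated_direction_const (t : R) :
  (Re (w t) * cos (arg_integral t) + Im (w t) * sin (arg_integral t)) / Cmod (w t)
    = Re (w 0) / Cmod (w 0) /\
  (Im (w t) * cos (arg_integral t) - Re (w t) * sin (arg_integral t)) / Cmod (w t)
    = Im (w 0) / Cmod (w 0).
Proof.
  set (x s := Re (w s)). set (y s := Im (w s)).
  assert (N_pos : forall s, 0 < x s ^ 2 + y s ^ 2) by (intro s; apply Cnorm2_pos, w_nz).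
  assert (r0_nz : Cmod (w 0) <> 0) by (apply Rgt_not_eq, Cmod_gt_0, w_nz).
  change (Re (w t)) with (x t); change (Im (w t)) with (y t);
    change (Re (w 0)) with (x 0); change (Im (w 0)) with (y 0).
  split.
  - replace (x 0 / Cmod (w 0)) with
      ((x 0 * cos (arg_integral 0) + y 0 * sin (arg_integral 0)) / Cmod (w 0))
      by (rewrite arg_integral_0, cos_0, sin_0; field; exact r0_nz).
    apply (derive_zero_const (fun s => (x s * cos (arg_integral s) + y s * sin (arg_integral s)) / Cmod (w s))).
    intro s. destruct (w_der s) as [Dx Dy].
    exact (is_derive_rotated_coordinate x y arg_integral s _ _ Dx Dy (is_derive_arg_integral s) (N_pos s)).
  - replace (y 0 / Cmod (w 0)) with
      ((y 0 * cos (arg_integral 0) - x 0 * sin (arg_integral 0)) / Cmod (w 0))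
      by (rewrite arg_integral_0, cos_0, sin_0; field; exact r0_nz).
    apply (derive_zero_const (fun s => (y s * cos (arg_integral s) - x s * sin (arg_integral s)) / Cmod (w s))).
    intro s. destruct (w_der s) as [Dx Dy].
    (* This is the first coordinate for the curve -i w = (y, -x), which has the same arg_integral. *)
    eapply is_derive_ext;
      [| apply (is_derive_rotated_coordinate y (fun s => - x s) arg_integral s _ (- Re (w' s)) Dy)].
    + intro r. unfold Rdiv, Cmod. f_equal; [ring | f_equal; f_equal; unfold x, y, Re, Im; ring].
    + exact (is_derive_opp _ _ _ Dx).
    + cbv beta. replace ((y s * - Re (w' s) - - x s * Im (w' s)) / (y s ^ 2 + (- x s) ^ 2))
        with ((x s * Im (w' s) - y s * Re (w' s)) / (x s ^ 2 + y s ^ 2)) by (f_equal; ring).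
      apply is_derive_arg_integral.
    + pose proof (N_pos s). nra.
Qed.

Section ContinuousArgument.

Variables (th : R -> R) (T : R).
Hypothesis th_cont : forall t, continuous th t.
Hypothesis polar : forall t, 0 <= t <= T -> w t = (RtoC (Cmod (w t)) * (cos (th t), sin (th t)))%C.

Lemma cos_sin_arg_sub_integral (t : R) : 0 <= t <= T ->
  cos (th t - arg_integral t) = cos (th 0) /\ sin (th t - arg_integral t) = sin (th 0).
Proof.
  intros Ht. destruct (rotated_direction_const t) as [E1 E2].
  destruct (polar_Re_Im _ _ (polar t Ht)) as [Hx Hy].
  destruct (polar_Re_Im _ _ (polar 0 ltac:(lra))) as [Hx0 Hy0].
  assert (r_pos : 0 < Cmod (w t)) by apply Cmod_gt_0, w_nz.
  assert (r0_pos : 0 < Cmod (w 0)) by apply Cmod_gt_0, w_nz.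
  rewrite Hx, Hy in E1, E2. rewrite Hx0 in E1. rewrite Hy0 in E2.
  rewrite cos_minus, sin_minus. split.
  - replace (cos (th 0)) with (Cmod (w 0) * cos (th 0) / Cmod (w 0)) by (field; lra).
    rewrite <- E1. field; lra.
  - replace (sin (th 0)) with (Cmod (w 0) * sin (th 0) / Cmod (w 0)) by (field; lra).
    rewrite <- E2. field; lra.
Qed.

Lemma is_RInt_Im_log_derivative : 0 <= T ->
  is_RInt (fun t => Im (w' t / w t)%C) 0 T (th T - th 0).
Proof.
  intros T_ge0.
  assert (arg_T : th T - arg_integral T - th 0 = 0).
  { apply (continuous_cos_eq_1_zero (fun t => th t - arg_integral t - th 0) T); [| | exact T_ge0 |].
    - intro t. apply (continuous_minus (K := R_AbsRing) (V := R_NormedModule));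
        [apply (continuous_minus (K := R_AbsRing) (V := R_NormedModule)) | apply continuous_const].
      + apply th_cont.
      + apply (ex_derive_continuous (K := R_AbsRing) (V := R_NormedModule)).
        eexists; apply is_derive_arg_integral.
    - rewrite arg_integral_0. ring.
    - intros t Ht. destruct (cos_sin_arg_sub_integral t Ht) as [Hc Hs].
      rewrite cos_minus, Hc, Hs. pose proof (sin2_cos2 (th 0)). unfold Rsqr in *. lra. }
  replace (th T - th 0) with (arg_integral T) by lra.
  apply (RInt_correct (V := R_CompleteNormedModule)), ex_RInt_continuous.
  intros; apply ccontinuous_log_derivative.
Qed.

Lemma cint_log_derivative : 0 <= T ->
  cint (fun t => (w' t / w t)%C) 0 T = (ln (Cmod (w T)) - ln (Cmod (w 0)), th T - th 0).
Proof.
  intros T_ge0. unfold cint. f_equal; apply (is_RInt_unique (V := R_CompleteNormedModule)).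
  - apply is_RInt_Re_log_derivative.
  - exact (is_RInt_Im_log_derivative T_ge0).
Qed.

End ContinuousArgument.
End LogarithmicDerivative.

Lemma pos_jordan_around0_neq0 (w : R -> C) (t : R) :
  pos_jordan_around0 w -> 0 <= t <= 2 * PI -> w t <> RtoC 0.
Proof. intros [_ [[off_curve _] _]] Ht Hw. apply off_curve. exists t. split; assumption. Qed.

Lemma cint_log_derivative_pos_jordan (w w' : R -> C) :
  cderivative w w' -> ccontinuous w' -> (forall t, w t <> RtoC 0) -> pos_jordan_around0 w ->
  cint (fun t => (w' t / w t)%C) 0 (2 * PI) = (0, 2 * PI).
Proof.
  intros w_der w'_cont w_nz Hw. destruct Hw as [[_ [closed _]] [inside0 winds]].
  destruct (winds _ inside0) as [th [th_cont [polar th_incr]]].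
  rewrite (cint_log_derivative w w' w_der w'_cont w_nz th (2 * PI) th_cont).
  - rewrite closed, th_incr. f_equal. ring.
  - intros t Ht. rewrite <- (Cminus_0_r (w t)) at 1 2. exact (polar t Ht).
  - pose proof PI_RGT_0. lra.
Qed.

(** * The curve ζ(t) *)

Section Zeta.

Variables (m : nat) (a b : elt).

Lemma zeta_in_S (n : nat) : (forall k, (m < k <= n)%nat -> a k = RtoC 0 /\ b k = RtoC 0) ->
  forall x y z, in_S n m (zeta m a b x y z).
Proof.
  intros HS x y z r Hr. destruct (HS r Hr) as [Ha Hb].
  unfold zeta. rewrite unitA_val, Ha, Hb by lia.
  destruct (Nat.leb_spec r m); [lia | ring].
Qed.

Lemma cderivative_zeta (X Y Z X' Y' Z' : R -> R) (k : nat) :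
  (forall t, is_derive X t (X' t)) -> (forall t, is_derive Y t (Y' t)) ->
  (forall t, is_derive Z t (Z' t)) ->
  cderivative (fun t => zeta m a b (X t) (Y t) (Z t) k) (fun t => zeta m a b (X' t) (Y' t) (Z' t) k).
Proof.
  intros DX DY DZ t. unfold zeta, Re, Im; simpl.
  split; auto_derive; try (repeat split; eexists; eauto);
    rewrite (is_derive_unique (fun s : R => X s) _ _ (DX t)),
      (is_derive_unique (fun s : R => Y s) _ _ (DY t)),
      (is_derive_unique (fun s : R => Z s) _ _ (DZ t)); ring.
Qed.

Lemma cint_zeta_combination (f : R -> C) (X Y Z : R -> R) (k : nat) (T : R) :
  (1 <= k <= m)%nat -> ccontinuous f ->
  (forall t, continuous X t) -> (forall t, continuous Y t) -> (forall t, continuous Z t) ->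
  (cint (fun t => f t * RtoC (X t)) 0 T
   + zeta m a b 0 1 0 k * cint (fun t => f t * RtoC (Y t)) 0 T
   + zeta m a b 0 0 1 k * cint (fun t => f t * RtoC (Z t)) 0 T)%C
  = cint (fun t => f t * zeta m a b (X t) (Y t) (Z t) k)%C 0 T.
Proof.
  intros Hk Hf HX HY HZ.
  assert (fr_cont : forall r : R -> R, (forall t, continuous r t) ->
    ccontinuous (fun t => f t * RtoC (r t))%C).
  { intros r Hr. apply ccontinuous_Cmult; [exact Hf | apply ccontinuous_RtoC, Hr]. }
  assert (cfr_cont : forall (c : C) (r : R -> R), (forall t, continuous r t) ->
    ccontinuous (fun t => c * (f t * RtoC (r t)))%C).
  { intros c r Hr. apply ccontinuous_Cmult; [apply ccontinuous_const | apply fr_cont, Hr]. }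
  rewrite <- (cint_scal _ _ _ _ (fr_cont Y HY)), <- (cint_scal _ _ _ _ (fr_cont Z HZ)).
  rewrite <- (cint_plus _ _ _ _ (fr_cont X HX) (cfr_cont _ Y HY)).
  rewrite <- cint_plus by (try apply ccontinuous_Cplus; auto).
  apply cint_ext. intro t. unfold zeta. rewrite unitA_val by lia.
  destruct (Nat.leb_spec k m); [ring | lia].
Qed.

End Zeta.

Definition circle_coord (Rad p q t : R) : R := Rad * (cos t * p + sin t * q).

Lemma is_derive_circle_coord (Rad p q t : R) :
  is_derive (circle_coord Rad p q) t (circle_coord Rad q (- p) t).
Proof. unfold circle_coord. auto_derive; [exact I | ring]. Qed.

Lemma Derive_circle_coord (Rad p q : R) : Derive (circle_coord Rad p q) = circle_coord Rad q (- p).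
Proof.
  apply functional_extensionality; intro t. apply is_derive_unique, is_derive_circle_coord.
Qed.

Lemma continuous_circle_coord (Rad p q t : R) : continuous (circle_coord Rad p q) t.
Proof.
  apply (ex_derive_continuous (K := R_AbsRing) (V := R_NormedModule)).
  eexists; apply is_derive_circle_coord.
Qed.

Section CircleCurve.

Variables (m : nat) (a b : elt) (Rad p1 p2 p3 q1 q2 q3 : R).

Definition zeta_circle (t : R) : elt :=
  zeta m a b (circle_coord Rad p1 q1 t) (circle_coord Rad p2 q2 t) (circle_coord Rad p3 q3 t).

Definition zeta_circle' (t : R) : elt :=
  zeta m a b (circle_coord Rad q1 (- p1) t) (circle_coord Rad q2 (- p2) t) (circle_coord Rad q3 (- p3) t).

Lemma cderivative_zeta_circle (u : nat) :
  cderivative (fun t => zeta_circle t u) (fun t => zeta_circle' t u).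
Proof. apply cderivative_zeta; intro; apply is_derive_circle_coord. Qed.

Lemma ccontinuous_zeta_circle' (u : nat) : ccontinuous (fun t => zeta_circle' t u).
Proof. eapply cderivative_ccontinuous, cderivative_zeta; intro; apply is_derive_circle_coord. Qed.

Hypothesis jordan : forall u, (1 <= u <= m)%nat -> pos_jordan_around0 (fun t => zeta_circle t u).

Lemma zeta_circle_neq0 (u : nat) (t : R) : (1 <= u <= m)%nat -> zeta_circle t u <> RtoC 0.
Proof.
  intros Hu. destruct (cos_sin_period_red t) as [t' [Ht' [Hc Hs]]].
  replace (zeta_circle t u) with (zeta_circle t' u)
    by (unfold zeta_circle, circle_coord; rewrite Hc, Hs; reflexivity).
  exact (pos_jordan_around0_neq0 _ t' (jordan u Hu) Ht').
Qed.

Lemma ccontinuous_Cinv_zeta_circle (u : nat) :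
  (1 <= u <= m)%nat -> ccontinuous (fun t => Cinv (zeta_circle t u)).
Proof.
  intros Hu. apply ccontinuous_Cinv.
  - exact (cderivative_ccontinuous _ _ (cderivative_zeta_circle u)).
  - intro t; exact (zeta_circle_neq0 u t Hu).
Qed.

Lemma cint_zeta_circle_log_derivative (u : nat) : (1 <= u <= m)%nat ->
  cint (fun t => (zeta_circle' t u / zeta_circle t u)%C) 0 (2 * PI) = (0, 2 * PI).
Proof.
  intros Hu. apply cint_log_derivative_pos_jordan.
  - apply cderivative_zeta_circle.
  - apply ccontinuous_zeta_circle'.
  - intro t; exact (zeta_circle_neq0 u t Hu).
  - exact (jordan u Hu).
Qed.

End CircleCurve.

Theorem theorem9 (n m : nat) (Ups : nat -> nat -> nat -> C) (us : nat -> nat)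
  (a b : nat -> C) :
  (1 <= m <= n)%nat ->
  is_algebra n m Ups us ->
  lin_indep3 n m a b ->
  (* standing assumption f_u(E_3) = C *)
  (forall u, (1 <= u <= m)%nat -> forall c : C,
     exists x y z : R, zeta m a b x y z u = c) ->
  (* E_3 is contained in S *)
  (forall k, (m < k <= n)%nat -> a k = RtoC 0 /\ b k = RtoC 0) ->
  forall (Rad p1 p2 p3 q1 q2 q3 : R),
    0 < Rad ->
    p1*p1 + p2*p2 + p3*p3 = 1 -> q1*q1 + q2*q2 + q3*q3 = 1 ->
    p1*q1 + p2*q2 + p3*q3 = 0 ->
    let gx := fun t => Rad * (cos t * p1 + sin t * q1) in
    let gy := fun t => Rad * (cos t * p2 + sin t * q2) in
    let gz := fun t => Rad * (cos t * p3 + sin t * q3) in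
    (forall u, (1 <= u <= m)%nat ->
       pos_jordan_around0 (fun t => zeta m a b (gx t) (gy t) (gz t) u)) ->
    eqA n (contour_int n m Ups us a b
             (fun x y z => inv n m Ups us (zeta m a b x y z)) gx gy gz)
          (fun k => Cmult (0, 2*PI) (unitA m k)).
Proof.
  intros Hmn [us_range _] _ _ HS Rad p1 p2 p3 q1 q2 q3 _ _ _ _ gx gy gz Hcurve k Hk.
  set (e := zeta_circle m a b Rad p1 p2 p3 q1 q2 q3).
  set (e' := zeta_circle' m a b Rad p1 p2 p3 q1 q2 q3).
  assert (inv_e : forall t, inv n m Ups us (e t) k = if Nat.leb k m then Cinv (e t k) else RtoC 0).
  { intro t. apply (inv_S n m Ups us us_range ltac:(lia)); [apply zeta_in_S, HS | | exact Hk].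
    intros u Hu. exact (zeta_circle_neq0 _ _ _ _ _ _ _ _ _ _ Hcurve u t Hu). }
  unfold e, zeta_circle in inv_e.
  unfold contour_int; cbv zeta.
  change gx with (circle_coord Rad p1 q1); change gy with (circle_coord Rad p2 q2);
    change gz with (circle_coord Rad p3 q3). rewrite !Derive_circle_coord.
  rewrite !(mul_S n m Ups us us_range ltac:(lia)) by (apply zeta_in_S, HS || exact Hk).
  rewrite unitA_val by lia. unfold idem_index.
  destruct (Nat.leb_spec k m) as [Hkm | Hkm].
  - rewrite (cint_zeta_combination m a b _ _ _ _ k); try (intro; apply continuous_circle_coord); [| lia |].
    + rewrite (cint_ext _ (fun t => e' t k / e t k)%C)
        by (intro t; unfold e, e', zeta_circle, zeta_circle'; rewrite inv_e; unfold Cdiv; ring).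
      rewrite Cmult_1_r. exact (cint_zeta_circle_log_derivative _ _ _ _ _ _ _ _ _ _ Hcurve k ltac:(lia)).
    + apply (ccontinuous_ext _ (fun t => Cinv (e t k))); [exact inv_e |].
      apply ccontinuous_Cinv_zeta_circle; assumption || lia.
  - repeat (rewrite (cint_ext _ (fun _ => RtoC 0)) by (intro t; rewrite inv_e; ring); rewrite cint_0).
    rewrite !Cmult_0_r, !Cplus_0_l. reflexivity.
Qed.
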